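(* Let $\mathcal{SB}=\langle\mathcal{L},A,\to,\text{supp}\rangle$ be an SBAF and $S$ a weakly adequate language extension. Then $Arg_w(S)=Init(S)$.
   Context: A language is a triple $\mathcal{L}=\langle L,\overline{\cdot},n\rangle$: $L$ is a nonempty set of sentences; $\overline{\cdot}$ assigns to each $s\in L$ a set $\overline{s}\subseteq L$ of sentences incompatible with $s$, and is symmetric; $n$ is a partial naming function assigning to an argument $a$ a sentence $n(a)\in L$ (if undefined, put $\overline{n(a)}:=\emptyset$), with $\overline{n(\langle\{t\},t\rangle)}=\emptyset$. An argument is a pair $a=\langle Prem(a),Conc(a)\rangle$ with $Prem(a)$ a nonempty finite subset of $L$ and $Conc(a)\in L$; $Sent(a):=Prem(a)\cup\{Conc(a)\}$, $Sent(E):=\bigcup_{a\in E}Sent(a)$. Argument $a$ attacks $b$ ($a\to b$) if $Conc(a)\in\overline{s}$ for some $s\in Sent(b)$ or $Conc(a)\in\overline{n(b)}$. An SBAF is $\langle\mathcal{L},A,\to,\text{supp}\rangle$ with $A$ a finite set of arguments. For $E\subseteq A$: $E$ defends $a\in A$ if for every $b\in A$ with $b\to a$ some element of $E$ attacks $b$; $E$ is conflict-free if no $a,b\in E$ with $a\to b$; admissible if conflict-free and defends all its elements. $S$ is compatible if no $s,t\in S$ with $s\in\overline t$. $Arg_s(S):=\{a\in A\mid Prem(a)\subseteq S\text{ and }\overline{n(a)}\cap S=\emptyset\}$; $R^S(E):=\{a\in A\mid a\in Arg_s(S)\text{ and }E\text{ defends }a\}$. For compatible $S$, $Init(S)$ is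 the largest admissible subset of $\{a\in A\mid Sent(a)\subseteq S\text{ and }\overline{n(a)}\cap S=\emptyset\}$, and $Arg_w(S)$ is the $\subseteq$-least set $E$ with $Init(S)\subseteq E$ and $R^S(E)=E$. A weakly adequate language extension is a compatible $S\subseteq Sent(A)$ such that $Sent(a)\subseteq S$ for every $a\in Arg_w(S)$. *)

From HB Require Import structures.
From mathcomp Require Import all_boot finmap.
Set Implicit Arguments. Unset Strict Implicit. Unset Printing Implicit Defensive.
Open Scope fset_scope.

(* Sentences live in a type T (the set L).  An argument is a pair
   (Prem, Conc) with Prem a finite subset of L and Conc in L. *)
Definition argument (T : choiceType) := ({fset T} * T)%type.

Section SBAF.
Variable T : choiceType.
(* inc s t  <->  t \in overline(s)  (the incompatibility map) *)
Variable inc : T -> T -> bool.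
(* partial naming function: None = undefined *)
Variable nm : argument T -> option T.
Variable A : {fset argument T}.

Definition Prem (a : argument T) : {fset T} := a.1.
Definition Conc (a : argument T) : T := a.2.
Definition Sent (a : argument T) : {fset T} := Prem a `|` [fset Conc a].
Definition SentE (E : {fset argument T}) : {fset T} := \bigcup_(a <- E) Sent a.

(* t \in overline(n(a)), with overline(n(a)) = emptyset when n(a) undefined *)
Definition incn (a : argument T) (t : T) : bool :=
  if nm a is Some u then inc u t else false.

Definition attacks (a b : argument T) : Prop :=
  (exists2 s, s \in Sent b & inc s (Conc a)) \/ incn b (Conc a).

Definition defends (E : {fset argument T}) (a : argument T) : Prop :=
  forall b, b \in A -> attacks b a -> exists2 c, c \in E & attacks c b.

Definition conflict_free (E : {fset argument T}) : Prop :=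
  forall a b, a \in E -> b \in E -> ~ attacks a b.

Definition admissible (E : {fset argument T}) : Prop :=
  conflict_free E /\ forall a, a \in E -> defends E a.

Definition compatible (S : {fset T}) : Prop :=
  forall s t, s \in S -> t \in S -> ~~ inc t s.

Definition name_disjoint (S : {fset T}) (a : argument T) : Prop :=
  forall t, t \in S -> ~~ incn a t.

Definition Arg_s (S : {fset T}) (a : argument T) : Prop :=
  a \in A /\ Prem a `<=` S /\ name_disjoint S a.

Definition R_S (S : {fset T}) (E : {fset argument T}) (a : argument T) : Prop :=
  Arg_s S a /\ defends E a.

Definition R_fixed (S : {fset T}) (E : {fset argument T}) : Prop :=
  forall a, R_S S E a <-> a \in E.

Definition init_dom (S : {fset T}) (a : argument T) : Prop :=
  a \in A /\ Sent a `<=` S /\ name_disjoint S a.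

Definition is_Init (S : {fset T}) (I : {fset argument T}) : Prop :=
  (forall a, a \in I -> init_dom S a) /\ admissible I /\
  (forall J : {fset argument T},
     (forall a, a \in J -> init_dom S a) -> admissible J -> J `<=` I).

Definition is_Arg_w (S : {fset T}) (I E : {fset argument T}) : Prop :=
  I `<=` E /\ R_fixed S E /\
  (forall E' : {fset argument T}, I `<=` E' -> R_fixed S E' -> E `<=` E').

Definition weakly_adequate (S : {fset T}) : Prop :=
  compatible S /\ S `<=` SentE A /\
  (forall I E, is_Init S I -> is_Arg_w S I E ->
     forall a, a \in E -> Sent a `<=` S).

End SBAF.

From HB Require Import structures.
From mathcomp Require Import all_boot finmap.
Set Implicit Arguments. Unset Strict Implicit. Unset Printing Implicit Defensive.
Open Scope fset_scope.

(* Weak adequacy puts every sentence of Arg_w(S) into the compatible set S,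
   so Arg_w(S) is conflict-free (an attack would put two incompatible
   sentences in S) and, being a fixpoint of R^S, defends its members; it also
   lies in the domain of Init(S).  Maximality of Init(S) gives
   Arg_w(S) <= Init(S); the reverse inclusion holds by definition. *)

Section WeakExtension.
Variables (T : choiceType) (inc : T -> T -> bool) (nm : argument T -> option T).
Variable A : {fset argument T}.
Variables (S : {fset T}) (E : {fset argument T}).

Hypothesis S_compatible : compatible inc S.
Hypothesis E_in_S : forall a, a \in E -> Sent a `<=` S.

Lemma Conc_in_Sent (a : argument T) : Conc a \in Sent a.
Proof. by rewrite /Sent in_fsetU in_fset1 eqxx orbT. Qed.

Lemma conflict_free_in_compatible :
  (forall a, a \in E -> name_disjoint inc nm S a) -> conflict_free inc nm E.
Proof.
move=> E_nd a b aE bE.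
have concS : Conc a \in S := fsubsetP (E_in_S aE) _ (Conc_in_Sent a).
case=> [[s sb inc_s] | inc_nb].
- have sS : s \in S := fsubsetP (E_in_S bE) _ sb.
  by move: (S_compatible concS sS); rewrite inc_s.
- by move: (E_nd b bE _ concS); rewrite inc_nb.
Qed.

Hypothesis E_fixed : R_fixed inc nm A S E.

Lemma R_fixed_init_dom (a : argument T) : a \in E -> init_dom inc nm A S a.
Proof.
move=> aE; have [[aA [_ nd]] _] := (E_fixed a).2 aE.
by split=> //; split=> //; exact: E_in_S.
Qed.

Lemma R_fixed_admissible : admissible inc nm A E.
Proof.
split; last by move=> a /E_fixed [].
by apply: conflict_free_in_compatible => a /R_fixed_init_dom [_ []].
Qed.

End WeakExtension.

Lemma Arg_w_eq_Init (T : choiceType) (inc : T -> T -> bool)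
    (nm : argument T -> option T) (A : {fset argument T})
    (S : {fset T}) (I E : {fset argument T}) :
  compatible inc S -> (forall a, a \in E -> Sent a `<=` S) ->
  is_Init inc nm A S I -> is_Arg_w inc nm A S I E -> E = I.
Proof.
move=> S_comp E_in_S [_ [_ I_max]] [IE [E_fixed _]].
apply/eqP; rewrite eqEfsubset IE andbT.
apply: I_max; first exact: R_fixed_init_dom E_in_S E_fixed.
exact: R_fixed_admissible S_comp E_in_S E_fixed.
Qed.

Theorem mainTheorem13 (T : choiceType) (inc : T -> T -> bool)
    (nm : argument T -> option T) (A : {fset argument T})
    (supp : rel (argument T)) :
  inhabited T ->
  (forall s t, inc s t = inc t s) ->
  (forall t u, nm ([fset t], t) = Some u -> forall v, ~~ inc u v) ->
  (forall a, a \in A -> Prem a != fset0) ->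
  forall S : {fset T}, weakly_adequate inc nm A S ->
  forall I E : {fset argument T},
    is_Init inc nm A S I -> is_Arg_w inc nm A S I E -> E = I.
Proof.
move=> _ _ _ _ S [S_comp [_ adequate]] I E I_init E_argw.
exact: Arg_w_eq_Init S_comp (adequate I E I_init E_argw) I_init E_argw.
Qed.
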